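(* Let $k\in \mathbb{Z}_+$, $\varepsilon\in (0,1)$, let $X\subset \mathbb{R}^d$ with $|X|=n$, and let $D$ be a simultaneous $\varepsilon$-coreset of $X$ for $k$-facility $p$-Centrum for all $p\in \{1,\dots,n\}$, i.e. for every $p\in\{1,\dots,n\}$ and every $C\subset\mathbb{R}^d$ with $|C|=k$, $\mathrm{cost}_p(D,C)\in[(1-\varepsilon)\mathrm{cost}_p(X,C),(1+\varepsilon)\mathrm{cost}_p(X,C)]$. Then $D$ is a simultaneous $\varepsilon$-coreset of $X$ for Ordered $k$-Median, i.e. for every $C\subset\mathbb{R}^d$ with $|C|=k$ and every $v\in\mathbb{R}^n$ with $v_1\ge\cdots\ge v_n\ge0$, $\mathrm{cost}_v(D,C)\in[(1-\varepsilon)\mathrm{cost}_v(X,C),(1+\varepsilon)\mathrm{cost}_v(X,C)]$.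
   Context: Distances are Euclidean and $d(x,C):=\min_{c\in C}d(x,c)$. $D$ is a finite multiset (weighted set with positive integer weights). For a finite multiset $Y$ whose elements are ordered (with multiplicity) so that $d(y_1,C)\ge d(y_2,C)\ge\cdots$, $\mathrm{cost}_p(Y,C):=\sum_{i=1}^{\min(p,|Y|)}d(y_i,C)$ and, for $v\in\mathbb{R}^n$, $\mathrm{cost}_v(Y,C):=\sum_{i=1}^{\min(n,|Y|)}v_i\,d(y_i,C)$. *)

From mathcomp Require Import all_boot all_order all_algebra.
Set Implicit Arguments. Unset Strict Implicit. Unset Printing Implicit Defensive.
Import Order.TTheory GRing.Theory Num.Theory.
Local Open Scope ring_scope.

Definition edist (R : rcfType) (d : nat) (x y : 'rV[R]_d) : R :=
  Num.sqrt (\sum_(i < d) (x 0 i - y 0 i) ^+ 2).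

(* d(x, C) = min_{c in C} d(x, c); C is given as a (duplicate-free) list of
   centers; for C = [::] we return 0 (never used: |C| = k >= 1). *)
Definition dist_to (R : rcfType) (d : nat) (C : seq 'rV[R]_d) (x : 'rV[R]_d) : R :=
  match C with
  | [::] => 0
  | c :: cs => foldr (fun c' m => Num.min (edist x c') m) (edist x c) cs
  end.

(* distances of the elements of the multiset Y (a list, with multiplicity)
   to C, sorted nonincreasingly *)
Definition sorted_dists (R : rcfType) (d : nat) (Y C : seq 'rV[R]_d) : seq R :=
  sort (fun a b : R => b <= a) (map (dist_to C) Y).

(* cost_p(Y,C) = sum of the min(p,|Y|) largest distances (0-based indices) *)
Definition cost_p (R : rcfType) (d : nat) (p : nat) (Y C : seq 'rV[R]_d) : R :=
  \sum_(i < size Y | (i < p)%N) nth 0 (sorted_dists Y C) i.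

(* cost_v(Y,C) = sum_{i < min(n,|Y|)} v_i d(y_i,C) (0-based indices) *)
Definition cost_v (R : rcfType) (d n : nat) (v : 'I_n -> R) (Y C : seq 'rV[R]_d) : R :=
  \sum_(i < n | (i < size Y)%N) v i * nth 0 (sorted_dists Y C) i.

(** Summation by parts writes the ordered cost with nonincreasing weights [v]
    as [cost_v = \sum_p (v_p - v_(p+1)) cost_(p+1)], a combination of
    [p]-centrum costs with nonnegative coefficients ([v] extended by [0] past
    [n]); the coreset bounds for each [cost_p] therefore add up to the bounds
    for [cost_v]. *)
From mathcomp Require Import all_boot all_order all_algebra.
From mathcomp Require Import ring.
Import Order.TTheory GRing.Theory Num.Theory.
Local Open Scope ring_scope.

Lemma sum_by_parts (R : comPzRingType) (a g : nat -> R) (n : nat) :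
  \sum_(i < n) a i * g i =
  \sum_(j < n) (a j - a j.+1) * (\sum_(i < j.+1) g i) + a n * \sum_(i < n) g i.
Proof.
elim: n => [|n IH]; first by rewrite !big_ord0 mulr0 addr0.
rewrite big_ord_recr /= IH [in RHS]big_ord_recr /= [\sum_(i < n.+1) g i]big_ord_recr /=.
ring.
Qed.

Lemma sum_nth_ord_filter (V : nmodType) (s : seq V) (p : nat) :
  \sum_(i < size s | (i < p)%N) s`_i = \sum_(i < p) s`_i.
Proof.
rewrite -(big_mkord (fun i => (i < p)%N)) -(big_mkord xpredT).
rewrite (@big_nat_widen _ _ _ 0 p (size s + p)) ?leq_addl //.
rewrite (@big_nat_widen _ _ _ 0 (size s) (size s + p)) ?leq_addr //.
rewrite [RHS]big_mkcond [LHS]big_mkcond /=; apply: eq_bigr => i _.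
by case: (ltnP i p); case: (ltnP i (size s)) => [|/(nth_default 0) ->];
  rewrite /= ?andbT ?andbF.
Qed.

Lemma ler_nonneg_comb (R : numDomainType) (I : Type) (r : seq I) (P : pred I)
    (w x y : I -> R) (lo hi : R) :
  (forall i, P i -> 0 <= w i) ->
  (forall i, P i -> lo * x i <= y i <= hi * x i) ->
  lo * \sum_(i <- r | P i) w i * x i <= \sum_(i <- r | P i) w i * y i
    <= hi * \sum_(i <- r | P i) w i * x i.
Proof.
move=> w_ge0 xy; rewrite !mulr_sumr; apply/andP; split; apply: ler_sum => i Pi;
  have /andP[lo_y y_hi] := xy i Pi; by rewrite mulrCA ler_wpM2l ?w_ge0.
Qed.

Section ZeroExtension.

Context {R : numDomainType} {n : nat} (v : 'I_n -> R).

Definition ext0 (i : nat) : R := if insub i is Some j then v j else 0.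

Lemma ext0_ord (j : 'I_n) : ext0 j = v j.
Proof. by rewrite /ext0 valK. Qed.

Lemma ext0_out (i : nat) : (n <= i)%N -> ext0 i = 0.
Proof. by move=> n_le_i; rewrite /ext0 insubF // ltnNge n_le_i. Qed.

Lemma ext0_ge0 (i : nat) : (forall j, 0 <= v j) -> 0 <= ext0 i.
Proof. by move=> v_ge0; rewrite /ext0; case: insubP. Qed.

Lemma ext0_decr (m : nat) :
  (forall i j : 'I_n, (i <= j)%N -> v j <= v i) -> (forall j, 0 <= v j) ->
  ext0 m.+1 <= ext0 m.
Proof.
move=> v_decr v_ge0; case: (ltnP m.+1 n) => [lt_m1n|n_le_m1].
  have lt_mn := ltnW lt_m1n.
  by rewrite -[m.+1]/(val (Ordinal lt_m1n)) -[m]/(val (Ordinal lt_mn)) !ext0_ord v_decr.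
by rewrite ext0_out ?ext0_ge0.
Qed.

End ZeroExtension.

Section OrderedCosts.

Variables (R : rcfType) (d : nat).
Implicit Types (Y C : seq 'rV[R]_d).

Lemma size_sorted_dists Y C : size (sorted_dists Y C) = size Y.
Proof. by rewrite size_sort size_map. Qed.

Lemma cost_pE p Y C : cost_p p Y C = \sum_(i < p) (sorted_dists Y C)`_i.
Proof.
by have := @sum_nth_ord_filter _ (sorted_dists Y C) p; rewrite size_sorted_dists.
Qed.

Lemma cost_v_by_parts n (v : 'I_n -> R) Y C :
  cost_v v Y C = \sum_(p < n) (ext0 v p - ext0 v p.+1) * cost_p p.+1 Y C.
Proof.
transitivity (\sum_(i < n) ext0 v i * (sorted_dists Y C)`_i).
  rewrite /cost_v big_mkcond; apply: eq_bigr => i _; rewrite ext0_ord.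
  by case: ltnP => //; rewrite -(size_sorted_dists Y C) => /(nth_default 0) ->; rewrite mulr0.
rewrite sum_by_parts ext0_out // mul0r addr0.
by apply: eq_bigr => p _; rewrite cost_pE.
Qed.

End OrderedCosts.

Theorem lemma4p7 (R : rcfType) (d k n : nat) (eps : R)
  (X D : seq 'rV[R]_d) :
  (0 < k)%N -> 0 < eps < 1 ->
  uniq X -> size X = n ->
  (forall (p : nat) (C : seq 'rV[R]_d),
      (1 <= p <= n)%N -> uniq C -> size C = k ->
      (1 - eps) * cost_p p X C <= cost_p p D C <= (1 + eps) * cost_p p X C) ->
  forall (C : seq 'rV[R]_d) (v : 'I_n -> R),
    uniq C -> size C = k ->
    (forall i j : 'I_n, (i <= j)%N -> v j <= v i) ->
    (forall i : 'I_n, 0 <= v i) ->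
    (1 - eps) * cost_v v X C <= cost_v v D C <= (1 + eps) * cost_v v X C.
Proof.
move=> _ _ _ _ coreset_p C v uC sC v_decr v_ge0.
rewrite !cost_v_by_parts; apply: ler_nonneg_comb => [p _|p _].
  by rewrite subr_ge0 ext0_decr.
by apply: coreset_p => //=; rewrite ltn_ord.
Qed.
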